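(* A Borel measurable function $f:\mathbb{R}^n\to\mathbb{R}$ is level convex if and only if for every $d\ge1$, every open set $\Omega\subseteq\mathbb{R}^d$, every Borel probability measure $\mu$ on $\mathbb{R}^d$ supported on $\Omega$ and every $\varphi\in L^1_\mu(\Omega;\mathbb{R}^n)$, $$f\Big(\int_\Omega\varphi\,d\mu\Big)\le\mu\text{-}\operatorname*{ess\,sup}_{x\in\Omega}f(\varphi(x)).$$ In particular, if $f$ is level convex and $\Omega$ has finite positive Lebesgue measure, then $f\big(\frac{1}{|\Omega|}\int_\Omega\varphi\,dx\big)\le\operatorname{ess\,sup}_{x\in\Omega}f(\varphi(x))$ for every $\varphi\in L^1(\Omega;\mathbb{R}^n)$.
   Context: Level convex: $f(\lambda\xi+(1-\lambda)\eta)\le\max\{f(\xi),f(\eta)\}$ for all $\xi,\eta\in\mathbb{R}^n$ and $\lambda\in(0,1)$. $\mu\text{-}\operatorname{ess\,sup}$ denotes the essential supremum with respect to $\mu$. *)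

From HB Require Import structures.
From mathcomp Require Import all_boot all_order all_algebra.
From mathcomp Require Import all_classical all_reals all_analysis.
From mathcomp Require Import ess_sup_inf.

Set Implicit Arguments.
Unset Strict Implicit.
Unset Printing Implicit Defensive.

Import Order.TTheory GRing.Theory Num.Theory.
Import numFieldNormedType.Exports.

Local Open Scope classical_set_scope.
Local Open Scope ring_scope.

(* R^n is represented by row vectors 'rV[R]_n, with its usual (max-norm)
   topology; the Borel sigma-algebra on R^n is the one generated by its open
   sets. *)
Definition borelRn (R : realType) (n : nat) := g_sigma_algebraType (@open 'rV[R]_n).

Definition level_convex (R : realType) (n : nat) (f : 'rV[R]_n -> R) : Prop :=
  forall (xi eta : 'rV[R]_n) (l : R), 0 < l < 1 ->
    f (l *: xi + (1 - l) *: eta) <= Num.max (f xi) (f eta).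

Definition borel_measurable_Rn (R : realType) (n : nat) (f : 'rV[R]_n -> R) : Prop :=
  @measurable_fun _ _ (borelRn R n) R setT f.

Definition L1_on (R : realType) (d n : nat)
    (mu : {measure set (borelRn R d) -> \bar R}) (Omega : set (borelRn R d))
    (phi : borelRn R d -> 'rV[R]_n) : Prop :=
  forall i : 'I_n, mu.-integrable Omega (fun x => (phi x ord0 i)%:E).

Definition vint (R : realType) (d n : nat)
    (mu : {measure set (borelRn R d) -> \bar R}) (Omega : set (borelRn R d))
    (phi : borelRn R d -> 'rV[R]_n) : 'rV[R]_n :=
  \row_(i < n) fine (\int[mu]_(x in Omega) (phi x ord0 i)%:E)%E.

Definition ess_sup_on (R : realType) (d : nat)
    (mu : {measure set (borelRn R d) -> \bar R}) (Omega : set (borelRn R d))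
    (g : borelRn R d -> R) : \bar R :=
  ess_sup mu (fun x => if x \in Omega then (g x)%:E else -oo%E).

Definition is_lebesgue_Rd (R : realType) (d : nat)
    (lam : {measure set (borelRn R d) -> \bar R}) : Prop :=
  forall a b : 'rV[R]_d, (forall i, a ord0 i <= b ord0 i) ->
    lam [set x : borelRn R d | forall i, a ord0 i < x ord0 i <= b ord0 i]
    = (\prod_(i < d) (b ord0 i - a ord0 i))%:E.

(* If f is level convex and t is the essential supremum of f o phi, the sublevel
   set {f <= t} is convex and contains phi x for almost every x, so it suffices
   that the mean of an integrable map taking values a.e. in a convex set K of R^n
   lies in K. If the mean m were outside K, a supporting hyperplane at m (given by
   finite-dimensional separation, proved by induction on the dimension) would
   satisfy a . phi >= a . m a.e. with equality of integrals; hence phi lies a.e.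
   in the hyperplane, a copy of R^(n-1), and induction applies there.
   Conversely, testing the inequality on the law charging xi and eta with masses
   l and 1 - l gives level convexity. *)

From HB Require Import structures.
From mathcomp Require Import all_boot all_order all_algebra.
From mathcomp Require Import all_classical all_reals all_analysis.
From mathcomp Require Import ess_sup_inf.
From mathcomp Require Import ring lra.

Set Implicit Arguments.
Unset Strict Implicit.
Unset Printing Implicit Defensive.

Import Order.TTheory GRing.Theory Num.Theory.
Import numFieldNormedType.Exports.

Local Open Scope classical_set_scope.
Local Open Scope ring_scope.

Local Notation hd v := (v ord0 ord0).
Local Notation tl v := (col' ord0 v).

Section RowInsert.
Variable R : pzRingType.

Definition row_ins n (j : 'I_n.+1) (x : R) (w : 'rV[R]_n) : 'rV[R]_n.+1 :=
  \row_i oapp (w ord0) x (unlift j i).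

Lemma row_ins_at n (j : 'I_n.+1) x w : row_ins j x w ord0 j = x.
Proof. by rewrite mxE unlift_none. Qed.

Lemma col'_row_ins n (j : 'I_n.+1) x w : col' j (row_ins j x w) = w.
Proof. by apply/rowP => i; rewrite !mxE liftK. Qed.

Lemma row_ins_col' n (j : 'I_n.+1) (v : 'rV[R]_n.+1) :
  row_ins j (v ord0 j) (col' j v) = v.
Proof.
by apply/rowP => i; rewrite mxE; case: unliftP => [k ->|->] /=; rewrite ?mxE.
Qed.

Lemma row_ins_comb n (j : 'I_n.+1) l k x y (u w : 'rV[R]_n) :
  row_ins j (l * x + k * y) (l *: u + k *: w)
  = l *: row_ins j x u + k *: row_ins j y w.
Proof. by apply/rowP => i; rewrite !mxE; case: unlift => //= m; rewrite !mxE. Qed.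

Lemma row_ins0 n (j : 'I_n.+1) : row_ins j 0 0 = 0.
Proof. by apply/rowP => i; rewrite !mxE; case: unlift => //= m; rewrite !mxE. Qed.

Lemma head_comb n l k (u v : 'rV[R]_n.+1) :
  hd (l *: u + k *: v) = l * hd u + k * hd v.
Proof. by rewrite !mxE. Qed.

Lemma tail_comb n l k (u v : 'rV[R]_n.+1) :
  tl (l *: u + k *: v) = l *: tl u + k *: tl v.
Proof. by apply/rowP => i; rewrite !mxE. Qed.

Lemma row_eq0_head_tail n (v : 'rV[R]_n.+1) : hd v = 0 -> tl v = 0 -> v = 0.
Proof. by move=> h t; rewrite -(row_ins_col' ord0 v) h t row_ins0. Qed.

End RowInsert.

Section RowDot.
Variable R : comNzRingType.

Definition rdot n (a v : 'rV[R]_n) : R := \sum_i a ord0 i * v ord0 i.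

Lemma rdot_comb n (a u v : 'rV[R]_n) l k :
  rdot a (l *: u + k *: v) = l * rdot a u + k * rdot a v.
Proof.
rewrite /rdot !mulr_sumr -big_split /=; apply: eq_bigr => i _; rewrite !mxE; ring.
Qed.

Lemma rdotB n (a u v : 'rV[R]_n) : rdot a (u - v) = rdot a u - rdot a v.
Proof.
have -> : u - v = 1 *: u + (-1) *: v by rewrite scale1r scaleN1r.
by rewrite rdot_comb; ring.
Qed.

Lemma rdotZ n (a v : 'rV[R]_n) l : rdot a (l *: v) = l * rdot a v.
Proof. by rewrite -[_ *: v]addr0 -(scale0r v) rdot_comb; ring. Qed.

Lemma rdot_col' n (j : 'I_n.+1) (a v : 'rV[R]_n.+1) :
  rdot a v = a ord0 j * v ord0 j + rdot (col' j a) (col' j v).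
Proof.
by rewrite /rdot (bigD1_ord j) //=; congr (_ + _); apply: eq_bigr => i _; rewrite !mxE.
Qed.

End RowDot.

Section Separation.
Variable R : realType.

Definition convex_rV n (K : set 'rV[R]_n) :=
  forall u v (l : R), K u -> K v -> 0 < l < 1 -> K (l *: u + (1 - l) *: v).

Lemma convex_comb_head0 n (u v : 'rV[R]_n.+1) : 0 < hd u -> hd v < 0 ->
  exists2 t, 0 < t < 1 & hd (t *: u + (1 - t) *: v) = 0.
Proof.
move=> hu hv; have hp : 0 < hd u - hd v by lra.
exists (- hd v / (hd u - hd v)); last by rewrite head_comb; field; rewrite gt_eqF.
by rewrite divr_gt0 ?oppr_gt0 //= ltr_pdivrMr // mul1r; lra.
Qed.

Section Extension.
Variables (n : nat) (K : set 'rV[R]_n.+1) (b : 'rV[R]_n).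
Hypothesis convK : convex_rV K.
Hypothesis b_ge0 : forall v, K v -> hd v <= 0 -> 0 <= rdot b (tl v).

(* The segment from [u] to [v] crosses the hyperplane [hd = 0], where [b] is nonnegative. *)
Lemma slope_le u v : K u -> K v -> 0 < hd u -> hd v < 0 ->
  - (rdot b (tl u) / hd u) <= rdot b (tl v) / - hd v.
Proof.
move=> Ku Kv hu hv; have [t t01 ht] := convex_comb_head0 hu hv.
have := b_ge0 (convK Ku Kv t01); rewrite ht lexx tail_comb rdot_comb => /(_ isT).
rewrite head_comb in ht; move: t01 => /andP[t0 t1].
set p := rdot b (tl u); set q := rdot b (tl v) => pq.
have cross : 0 <= - hd v * p + hd u * q.
  have e : (1 - t) * (- hd v * p + hd u * q) = hd u * (t * p + (1 - t) * q).
    have ht' : (1 - t) * - hd v = t * hd u by lra.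
    by rewrite mulrDr mulrA ht'; ring.
  have : 0 <= (1 - t) * (- hd v * p + hd u * q) by rewrite e mulr_ge0 // ltW.
  by rewrite pmulr_rge0 // subr_gt0.
rewrite -subr_ge0.
have -> : q / - hd v - - (p / hd u) = (- hd v * p + hd u * q) / (hd u * - hd v).
  by field; rewrite lt_eqF // gt_eqF.
by rewrite divr_ge0 // mulr_ge0 //; lra.
Qed.

Lemma extend_functional : (exists v, K v /\ hd v < 0) ->
  exists c, forall v, K v -> 0 <= c * hd v + rdot b (tl v).
Proof.
move=> [v0 [Kv0 hv0]].
pose S := [set rdot b (tl v) / - hd v | v in [set v | K v /\ hd v < 0]].
have S0 : S !=set0 by exists (rdot b (tl v0) / - hd v0); exists v0.
have Slb : has_lbound S.
  exists 0 => _ [v [Kv hv] <-].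
  by apply: divr_ge0; [apply: b_ge0 => //; exact: ltW | rewrite oppr_ge0 ltW].
exists (inf S) => v Kv; have [hv|hv|hv] := ltgtP (hd v) 0.
- have : inf S <= rdot b (tl v) / - hd v by apply: (ge_inf Slb); exists v.
  by rewrite ler_pdivlMr ?oppr_gt0 // mulrN; lra.
- have : - (rdot b (tl v) / hd v) <= inf S.
    by apply: lb_le_inf S0 _ => _ [w [Kw hw] <-]; apply: slope_le.
  by rewrite lerNl ler_pdivlMr // mulNr; lra.
- by rewrite hv mulr0 add0r; apply: b_ge0; rewrite ?hv.
Qed.

End Extension.

Lemma separation_step n (K : set 'rV[R]_n.+1) :
  (forall K' : set 'rV[R]_n, convex_rV K' -> K' !=set0 -> ~ K' 0 ->
     exists2 b, b != 0 & forall w, K' w -> 0 <= rdot b w) ->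
  convex_rV K -> ~ K 0 -> ~ (exists2 v, K v & hd v <= 0 /\ tl v = 0) ->
  exists2 a, a != 0 & forall v, K v -> 0 <= rdot a v.
Proof.
move=> IH convK K0 axis.
have [[v0 [Kv0 hv0]]|hd_ge0] := pselect (exists v, K v /\ hd v < 0); last first.
  exists (row_ins ord0 1 0).
    by apply/eqP => /rowP/(_ ord0); rewrite row_ins_at mxE; apply/eqP/oner_neq0.
  move=> v Kv; rewrite (rdot_col' ord0) row_ins_at col'_row_ins /rdot big1 => [|i _].
    by rewrite addr0 mul1r leNgt; apply/negP => hv; apply: hd_ge0; exists v.
  by rewrite mxE mul0r.
pose A := [set tl v | v in [set v | K v /\ hd v <= 0]].
have convA : convex_rV A.
  move=> _ _ l [u [Ku hu] <-] [v [Kv hv] <-] l01.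
  exists (l *: u + (1 - l) *: v); last exact: tail_comb.
  split; first exact: convK.
  by rewrite head_comb; case/andP: l01 => l0 l1; nra.
have [b b0 Ab] : exists2 b, b != 0 & forall w, A w -> 0 <= rdot b w.
  apply: IH convA _ _.
    by exists (tl v0), v0 => //; split => //; exact: ltW.
  by move=> [v [Kv hv] tv]; apply: axis; exists v.
have b_ge0 v : K v -> hd v <= 0 -> 0 <= rdot b (tl v) by move=> Kv hv; apply: Ab; exists v.
have [c Hc] := extend_functional convK b_ge0 (ex_intro _ v0 (conj Kv0 hv0)).
exists (row_ins ord0 c b).
  by apply: contra_neq b0 => e; rewrite -(col'_row_ins ord0 c b) e; apply/rowP => i; rewrite !mxE.
by move=> v Kv; rewrite (rdot_col' ord0) row_ins_at col'_row_ins; exact: Hc.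
Qed.

Definition flip_head n (v : 'rV[R]_n.+1) := row_ins ord0 (- hd v) (tl v).

Lemma flip_head_comb n l (u v : 'rV[R]_n.+1) :
  flip_head (l *: u + (1 - l) *: v) = l *: flip_head u + (1 - l) *: flip_head v.
Proof. by rewrite /flip_head -row_ins_comb head_comb tail_comb; congr row_ins; ring. Qed.

Lemma flip_headK n : involutive (@flip_head n).
Proof. by move=> v; rewrite /flip_head row_ins_at col'_row_ins opprK row_ins_col'. Qed.

Lemma flip_head0 n : flip_head (0 : 'rV[R]_n.+1) = 0.
Proof.
by rewrite /flip_head mxE oppr0 (_ : col' _ _ = 0) ?row_ins0 //; apply/rowP => i; rewrite !mxE.
Qed.

Lemma rdot_flip_head n (a v : 'rV[R]_n.+1) : rdot (flip_head a) v = rdot a (flip_head v).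
Proof.
by rewrite !(rdot_col' ord0) /flip_head !row_ins_at !col'_row_ins mulNr mulrN.
Qed.

Lemma separation n (K : set 'rV[R]_n) : convex_rV K -> K !=set0 -> ~ K 0 ->
  exists2 a, a != 0 & forall v, K v -> 0 <= rdot a v.
Proof.
elim: n K => [|n IH] K convK Kne K0.
  by case: Kne => v Kv; case: K0; rewrite -(thinmx0 v).
have [[v0 Kv0 [hv0 tv0]]|axis] := pselect (exists2 v, K v & hd v <= 0 /\ tl v = 0);
  last exact: separation_step.
have {}hv0 : hd v0 < 0.
  rewrite lt_neqAle hv0 andbT; apply/eqP => e.
  by apply: K0; rewrite -(row_eq0_head_tail e tv0).
pose K' := [set v | K (flip_head v)].
have [a a0 Ha] : exists2 a, a != 0 & forall v, K' v -> 0 <= rdot a v.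
  apply: separation_step IH _ _ _.
  - by move=> u w l Ku Kw l01; rewrite /K' /= flip_head_comb; apply: convK.
  - by rewrite /K' /= flip_head0.
  move=> [u Ku [hu tu]]; set w := flip_head u in Ku.
  have tw : tl w = 0 by rewrite col'_row_ins.
  have hw : 0 < hd w.
    rewrite row_ins_at oppr_gt0 lt_neqAle hu andbT; apply/eqP => e.
    by apply: K0; rewrite -(row_eq0_head_tail _ tw) // row_ins_at e oppr0.
  have [t t01 ht] := convex_comb_head0 hw hv0.
  apply: K0; have <- : t *: w + (1 - t) *: v0 = 0.
    by apply: row_eq0_head_tail => //; rewrite tail_comb tw tv0 !scaler0 addr0.
  exact: convK.
exists (flip_head a); first by apply: contra_neq a0 => e; rewrite -[a]flip_headK e flip_head0.
by move=> v Kv; rewrite rdot_flip_head; apply: Ha; rewrite /K' /= flip_headK.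
Qed.

End Separation.

Lemma supporting_halfspace (R : realType) n (K : set 'rV[R]_n) (m : 'rV[R]_n) :
  convex_rV K -> K !=set0 -> ~ K m ->
  exists2 a, a != 0 & forall v, K v -> rdot a m <= rdot a v.
Proof.
move=> convK [v0 Kv0] Km_notin; pose Km := [set v | K (v + m)].
have convKm : convex_rV Km.
  move=> u v l Ku Kv l01; rewrite /Km /=.
  have <- : l *: (u + m) + (1 - l) *: (v + m) = l *: u + (1 - l) *: v + m.
    by rewrite !scalerDr addrACA -scalerDl [l + _]addrC subrK scale1r.
  exact: convK.
have [||a a0 Ha] := @separation R n Km convKm.
- by exists (v0 - m); rewrite /Km /= subrK.
- by rewrite /Km /= add0r.
exists a => // v Kv; rewrite -subr_ge0 -rdotB; apply: Ha.
by rewrite /Km /= subrK.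
Qed.

Section HyperplaneChart.
Variables (F : fieldType) (n : nat) (a : 'rV[F]_n.+1) (j : 'I_n.+1) (b : F).
Hypothesis aj0 : a ord0 j != 0.

(* Parametrises the hyperplane [rdot a v = b] by the coordinates other than [j]. *)
Definition hyper_ins (w : 'rV[F]_n) : 'rV[F]_n.+1 :=
  row_ins j ((b - rdot (col' j a) w) / a ord0 j) w.

Lemma hyper_ins_col' v : rdot a v = b -> hyper_ins (col' j v) = v.
Proof.
move=> av; rewrite /hyper_ins -av (rdot_col' j) -[RHS](row_ins_col' j v).
by congr row_ins; field.
Qed.

Lemma hyper_ins_comb l (u w : 'rV[F]_n) :
  hyper_ins (l *: u + (1 - l) *: w) = l *: hyper_ins u + (1 - l) *: hyper_ins w.
Proof. by rewrite /hyper_ins -row_ins_comb rdot_comb; congr row_ins; field. Qed.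

End HyperplaneChart.

Section Barycenter.
Context {R : realType} {dd : measure_display} {T : measurableType dd}.
Variable mu : {measure set T -> \bar R}.
Local Open Scope ereal_scope.

Definition row_integral n (D : set T) (phi : T -> 'rV[R]_n) : 'rV[R]_n :=
  \row_(i < n) fine (\int[mu]_(x in D) (phi x ord0 i)%:E).

Lemma ae_witness (D : set T) (P : T -> Prop) : measurable D -> 0 < mu D ->
  (\forall x \ae mu, D x -> P x) -> exists2 x, D x & P x.
Proof.
move=> mD muD [N [mN muN sub]]; apply: contrapT => noP.
suff : mu D = 0 by move=> e; rewrite e ltxx in muD.
apply: (subset_measure0 mD mN) => // x Dx; apply: sub => /= Px.
by apply: noP; exists x => //; exact: Px.
Qed.

Lemma integrable_cst_on (D : set T) (k : R) : measurable D -> mu D < +oo ->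
  mu.-integrable D (fun _ => k%:E).
Proof.
move=> mD muoo; apply/integrableP; split; first exact: measurable_cst.
by rewrite integral_cst // lte_mul_pinfty.
Qed.

Lemma EFin_rdot n (a v : 'rV[R]_n) : (rdot a v)%:E = \sum_i (a ord0 i)%:E * (v ord0 i)%:E.
Proof. by rewrite /rdot -sumEFin; apply: eq_bigr => i _; rewrite EFinM. Qed.

Section RowIntegrable.
Variables (n : nat) (D : set T) (phi : T -> 'rV[R]_n).
Hypothesis mD : measurable D.
Hypothesis int_phi : forall i, mu.-integrable D (fun x => (phi x ord0 i)%:E).

Lemma integrable_rdot a : mu.-integrable D (fun x => (rdot a (phi x))%:E).
Proof.
apply: (eq_integrable mD (fun x => \sum_i (a ord0 i)%:E * (phi x ord0 i)%:E)).
  by move=> x _; rewrite EFin_rdot.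
by apply: integrable_sum => // i _; apply: integrableZl.
Qed.

Lemma integral_rdot a :
  \int[mu]_(x in D) (rdot a (phi x))%:E = (rdot a (row_integral D phi))%:E.
Proof.
under eq_integral do rewrite EFin_rdot.
rewrite integral_sum // => [|i]; last exact: integrableZl.
rewrite EFin_rdot; apply: eq_bigr => i _; rewrite integralZl // mxE fineK //.
exact: integrable_fin_num.
Qed.

End RowIntegrable.

Lemma ae_eq_integral_ge_cst (D : set T) (g : T -> R) (b : R) :
  measurable D -> mu D < +oo -> mu.-integrable D (EFin \o g) ->
  (\forall x \ae mu, D x -> b <= g x)%R ->
  \int[mu]_(x in D) (g x)%:E = b%:E * mu D ->
  \forall x \ae mu, D x -> g x = b.
Proof.
move=> mD muoo ig gb intg.
have ib := integrable_cst_on b mD muoo.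
have igb : mu.-integrable D (fun x => (g x - b)%:E).
  by apply: (eq_integrable mD (fun x => (g x)%:E - b%:E)) => //; exact: integrableB.
have int0 : \int[mu]_(x in D) `|(g x - b)%:E| = 0.
  rewrite -[RHS](subee (x := b%:E * mu D)); last by rewrite fin_numM // ge0_fin_numE.
  rewrite -[X in X - _]intg -integral_cst // -integralB_EFin //.
  apply: ae_eq_integral => //.
  - exact: measurable_int (integrable_abse igb).
  - exact: measurable_int (integrableB _ ig ib).
  - by apply: filterS gb => x gbx Dx /=; rewrite ger0_norm ?subr_ge0 ?gbx.
have := (ae_eq_integral_abs mu mD (measurable_int mu igb)).1 int0.
by apply: filterS => x gb0 Dx; apply/eqP; rewrite -subr_eq0 -eqe gb0.
Qed.

Lemma mean_in_convex n (K : set 'rV[R]_n) (D : set T) (phi : T -> 'rV[R]_n) :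
  measurable D -> 0 < mu D -> mu D < +oo -> convex_rV K ->
  (forall i, mu.-integrable D (fun x => (phi x ord0 i)%:E)) ->
  (\forall x \ae mu, D x -> K (phi x)) ->
  K ((fine (mu D))^-1 *: row_integral D phi).
Proof.
move=> mD muD0 muDoo; have muDE : mu D = (fine (mu D))%:E by rewrite fineK // ge0_fin_numE.
have muD_neq0 : fine (mu D) != 0%R by apply: contraTneq muD0 => e; rewrite muDE e ltxx.
elim: n K phi => [|n IH] K phi convK int_phi aeK.
  have [x _ Kx] := ae_witness mD muD0 aeK.
  by rewrite (thinmx0 (_ *: _)) -(thinmx0 (phi x)).
set m := _ *: _; have [//|Km] := pselect (K m).
have [a a0 a_supp] : exists2 a, (a != 0)%R & forall v, K v -> (rdot a m <= rdot a v)%R.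
  apply: supporting_halfspace => //.
  by have [x _ Kx] := ae_witness mD muD0 aeK; exists (phi x).
have on_hyperplane : \forall x \ae mu, D x -> rdot a (phi x) = rdot a m.
  apply: ae_eq_integral_ge_cst => //.
  - exact: integrable_rdot.
  - by apply: filterS aeK => x Kx Dx; exact/a_supp/Kx.
  - rewrite integral_rdot // muDE -EFinM; congr EFin.
    by rewrite /m rdotZ mulrAC mulVf // mul1r.
have [j aj0] : exists j, a ord0 j != 0%R.
  apply/existsP; apply: contraNT a0 => /existsPn a0; apply/eqP/rowP => j.
  by rewrite mxE; exact/eqP/negPn/a0.
pose K' := [set w | K (hyper_ins a j (rdot a m) w)].
have convK' : convex_rV K'.
  by move=> u w l Ku Kw l01; rewrite /K' /= hyper_ins_comb //; exact: convK.
have := IH K' (fun x => col' j (phi x)) convK'.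
have -> : (fine (mu D))^-1 *: row_integral D (fun x => col' j (phi x)) = col' j m.
  by apply/rowP => i; rewrite !mxE; congr (_ * fine _)%R; apply: eq_integral => x _; rewrite mxE.
rewrite /K' /= hyper_ins_col' //; apply.
  move=> i; apply: (eq_integrable mD (fun x => (phi x ord0 (lift j i))%:E)) => //.
  by move=> x _; rewrite mxE.
apply: filterS2 aeK on_hyperplane => x Kx ax Dx.
by rewrite hyper_ins_col' //; [exact: Kx | exact: ax].
Qed.

End Barycenter.

Lemma level_convex_mean_le_ess_sup (R : realType) n (f : 'rV[R]_n -> R)
    (dd : measure_display) (T : measurableType dd) (mu : {measure set T -> \bar R})
    (D : set T) (phi : T -> 'rV[R]_n) :
  level_convex f -> measurable D -> (0 < mu D)%E -> (mu D < +oo)%E ->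
  (forall i, mu.-integrable D (fun x => (phi x ord0 i)%:E)) ->
  ((f ((fine (mu D))^-1 *: row_integral mu D phi))%:E <=
     ess_sup mu (fun x => if x \in D then (f (phi x))%:E else -oo))%E.
Proof.
move=> lcf mD muD0 muDoo int_phi; set h := fun x => _.
have := ess_sup_ge mu h; case: (ess_sup mu h) => [t| |] h_le; last 2 first.
- by rewrite leey.
- have [x Dx] := ae_witness mD muD0 (filterS (fun x hx Dx => hx) h_le).
  by rewrite /h (mem_set Dx) leeNy_eq.
rewrite lee_fin; apply: (mean_in_convex (K := [set v | f v <= t]) mD) => //.
  move=> u v l fu fv l01; apply: le_trans (lcf u v l l01) _.
  by rewrite ge_max fu fv.
by apply: filterS h_le => x hx Dx; move: hx; rewrite /h (mem_set Dx) lee_fin.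
Qed.

Section TwoPointProbability.
Variables (R : realType) (dd : measure_display) (T : measurableType dd).
Variables (p : R) (p_ge0 : 0 <= p) (p_le1 : p <= 1) (a b : T).

Let onem_ge0 : 0 <= 1 - p. Proof. by rewrite subr_ge0. Qed.

Definition two_point :=
  measure_add (mscale (NngNum p_ge0) \d_a) (mscale (NngNum onem_ge0) \d_b).

Lemma two_pointE A : two_point A = (p * (a \in A)%:R + (1 - p) * (b \in A)%:R)%:E.
Proof. by rewrite /two_point measure_addE. Qed.

Lemma two_point_setT : two_point setT = 1%E.
Proof. by rewrite two_pointE !in_setT !mulr1 subrKC. Qed.

HB.instance Definition _ := Measure.on two_point.
HB.instance Definition _ :=
  Measure_isProbability.Build _ _ _ two_point two_point_setT.

End TwoPointProbability.

Section IndicatorInterpolation.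
Context {R : realType} {dd : measure_display} {T : measurableType dd}.
Variables (P : probability T R) (n : nat) (xi eta : 'rV[R]_n) (S : set T) (s : R).
Local Notation Pm := (P : {measure set T -> \bar R}).
Hypotheses (mS : measurable S) (PS : Pm S = s%:E).

Let interpE i x : ((xi + \1_S x *: (eta - xi)) ord0 i)%:E
  = ((xi ord0 i)%:E + ((eta - xi) ord0 i)%:E * (\1_S x)%:E)%E.
Proof. by rewrite !mxE -EFinM -EFinD mulrC. Qed.

Let PT : Pm setT = 1%E. Proof. exact: probability_setT. Qed.

Let integrable_cst k : P.-integrable setT (fun=> k%:E).
Proof. by apply: integrable_cst_on => //; rewrite PT ltry. Qed.

Let integrable_scaled_indic k : P.-integrable setT (fun x => k%:E * (\1_S x)%:E)%E.
Proof. by apply: integrableZl => //; exact: integrable_indic. Qed.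

Lemma integrable_indic_interp i :
  P.-integrable setT (fun x => ((xi + \1_S x *: (eta - xi)) ord0 i)%:E).
Proof.
apply: (eq_integrable measurableT
  (fun x => (xi ord0 i)%:E + ((eta - xi) ord0 i)%:E * (\1_S x)%:E)%E) => [x _|].
  by rewrite interpE.
exact: integrableD.
Qed.

Lemma row_integral_indic_interp :
  row_integral P setT (fun x => xi + \1_S x *: (eta - xi)) = xi + s *: (eta - xi).
Proof.
apply/rowP => i; rewrite !mxE; under eq_integral do rewrite interpE.
rewrite integralD //.
rewrite integral_cst // integralZl //; last exact: integrable_indic.
by rewrite integral_indic // setIT PS PT mule1 -EFinM -EFinD /= !mxE mulrC.
Qed.

End IndicatorInterpolation.

Lemma level_convex_of_mean_le_ess_sup (R : realType) n (f : 'rV[R]_n -> R) :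
  (forall (mu : probability (borelRn R 1) R) (phi : borelRn R 1 -> 'rV[R]_n),
     L1_on mu setT phi ->
     ((f (vint mu setT phi))%:E <= ess_sup_on mu setT (fun x => f (phi x)))%E) ->
  level_convex f.
Proof.
move=> mean_le xi eta l /andP[l0 l1].
pose a : borelRn R 1 := 0; pose b : borelRn R 1 := const_mx 1.
pose mu := two_point (ltW l0) (ltW l1) a b.
have ab : a != b by apply/eqP => /rowP/(_ ord0); rewrite !mxE; apply/eqP; rewrite eq_sym oner_eq0.
have mb : measurable [set b].
  rewrite -(setCK [set b]); apply: measurableC; apply: sub_sigma_algebra.
  by rewrite openC; exact/accessible_closed_set1/hausdorff_accessible/norm_hausdorff.
have mub : (mu : {measure set (borelRn R 1) -> \bar R}) [set b] = (1 - l)%:E.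
  have : mu [set b] = (1 - l)%:E.
    rewrite /mu two_pointE (mem_set (erefl b : [set b] b)) memNset ?mulr0 ?add0r ?mulr1 //.
    by move=> /= e; rewrite e eqxx in ab.
  exact.
pose phi x := xi + \1_[set b] x *: (eta - xi).
have int_phi : L1_on mu setT phi by move=> i; exact: integrable_indic_interp.
have := mean_le mu phi int_phi.
have -> : vint mu setT phi = l *: xi + (1 - l) *: eta.
  rewrite [LHS](row_integral_indic_interp xi eta mb mub).
  by apply/rowP => k; rewrite !mxE; ring.
rewrite -lee_fin => /le_trans; apply; apply/ess_supP/nearW => x.
rewrite (mem_set (I : setT x)) lee_fin /phi indicE.
case: (x \in _); first by rewrite scale1r addrC subrK le_max lexx orbT.
by rewrite scale0r addr0 le_max lexx.
Qed.

Theorem mainTheorem20 (R : realType) (n : nat) (f : 'rV[R]_n -> R) :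
  borel_measurable_Rn f ->
  (level_convex f <->
    (forall (d : nat) (Omega : set 'rV[R]_d)
            (mu : probability (borelRn R d) R)
            (phi : borelRn R d -> 'rV[R]_n),
        (0 < d)%N -> open Omega -> mu (~` Omega) = 0%E ->
        L1_on mu Omega phi ->
        ((f (vint mu Omega phi))%:E <= ess_sup_on mu Omega (fun x => f (phi x)))%E))
  /\
  (level_convex f ->
    forall (d : nat) (Omega : set 'rV[R]_d)
           (lam : {measure set (borelRn R d) -> \bar R})
           (phi : borelRn R d -> 'rV[R]_n),
      (0 < d)%N -> open Omega -> is_lebesgue_Rd lam ->
      (0 < lam Omega)%E -> (lam Omega < +oo)%E ->
      L1_on lam Omega phi ->
      ((f ((fine (lam Omega))^-1 *: vint lam Omega phi))%:E
         <= ess_sup_on lam Omega (fun x => f (phi x)))%E).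
Proof.
move=> _; have mOpen d (O : set 'rV[R]_d) : open O -> measurable (O : set (borelRn R d)).
  exact: sub_sigma_algebra.
split; last first.
  move=> lcf d O lam phi _ oO _ lam0 lamoo.
  exact: level_convex_mean_le_ess_sup (mOpen _ _ oO) lam0 lamoo.
split=> [lcf d O mu phi _ oO muC0 int_phi|mean_le].
  have muO : (mu : {measure set (borelRn R d) -> \bar R}) O = 1%E.
    have : mu O = 1%E.
      by rewrite -(setCK O) probability_setC ?muC0 ?sube0 //; exact: measurableC (mOpen _ _ oO).
    exact.
  have := level_convex_mean_le_ess_sup lcf (mOpen _ _ oO) _ _ int_phi.
  by rewrite muO invr1 scale1r; apply; rewrite ?lte01 ?ltry.
apply: level_convex_of_mean_le_ess_sup => mu phi.
by apply: mean_le; rewrite ?setCT ?measure0 //; exact: openT.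
Qed.
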